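(* Let $\Gamma$ be a coloring and $\Omega$ a $k$-ordering of $T_{d,k}$, and let $\mathcal T$ be the initial $d$-simplex. Then $(T_{d,k},\Gamma,\Omega,\mathcal T)$ is an object of $\mathscr C_{d,k}$ and it is universal: for every object $(\widetilde Y,\widehat\gamma,\widehat\omega,\widehat{\mathfrak a}_0)$ of $\mathscr C_{d,k}$ there exists a unique morphism $(T_{d,k},\Gamma,\Omega,\mathcal T)\to(\widetilde Y,\widehat\gamma,\widehat\omega,\widehat{\mathfrak a}_0)$.
   Context: Fix $d,k\ge1$, write $[\![d]\!]=\{0,\dots,d\}$. Multicomplexes: a $d$-multicomplex is a triple $\widetilde X=(X,\mathsf m,\mathsf g)$ where $X$ is a $d$-dimensional simplicial complex on a countable vertex set, $\mathsf m:X\to\mathbb N$ equals $1$ on the empty cell and on vertices, the multicells are pairs $(\tau,r)$, $\tau\in X$, $1\le r\le\mathsf m(\tau)$ (dimension $\dim\tau$), and $\mathsf g$ assigns to each multicell $(\tau,r)$ and each codimension-one face $\sigma$ of $\tau$ a multicell $\mathsf g((\tau,r),\sigma)=(\sigma,s)$; containment $\preceq$ is the reflexive–transitive closure of ''$\mathfrak b=\mathsf g(\mathfrak a,\sigma)$''; consistency is required: if $(\sigma,s),(\sigma',s')$ have equal dimension, are contained in a common multicell, and $\rho=\sigma\cap\sigma'$ has codimension one in both, then $\mathsf g((\sigma,s),\rho)=\mathsf g((\sigma',s'),\rho)$. A simplicial complex is a multicomplex with $\mathsf m\equiv1$. $\widetilde X$ is pure if every multicell lies in a $d$-multicell; two $d$-multicells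 are neighbors if they contain a common $(d-1)$-multicell; $\widetilde X$ is $d$-lower path connected if any two $d$-multicells are joined by a chain of neighbors. For a $(d-1)$-multicell $\mathfrak b$, $\delta(\mathfrak b)$ is the set of $d$-multicells containing it and $\deg\mathfrak b=|\delta(\mathfrak b)|$. A coloring is a map $\gamma$ from vertices to $[\![d]\!]$ injective on every $d$-cell, extended to cells by $\gamma(\sigma)=\{\gamma(v):v\in\sigma\}$ and to multicells via their underlying cell. A $k$-ordering $\omega$ assigns to each $(d-1)$-multicell $\mathfrak b$ a homomorphism $\omega_{\mathfrak b}:\mathbb Z/k\mathbb Z\to\mathrm{Sym}(\delta(\mathfrak b))$ whose image acts transitively. The category $\mathscr C_{d,k}$ has as objects quartets $(\widetilde X,\gamma,\omega,\mathfrak a_0)$ with $\widetilde X$ a pure, colorable, $d$-lower path connected $d$-multicomplex all of whose $(d-1)$-multicells have degree $\le k$, $\gamma$ a coloring, $\omega$ a $k$-ordering, and $\mathfrak a_0$ a $d$-multicell (root). A morphism $(\widetilde X,\gamma,\omega,\mathfrak a_0)\to(\widetilde Y,\widehat\gamma,\widehat\omega,\widehat{\mathfrak a}_0)$ is a map $\widetilde\varphi$ from multicells of $\widetilde X$ to multicells of $\widetilde Y$ lying over a simplicial map $\varphi:X\to Y$ (the multicell $\widetilde\varphi((\sigma,r))$ lies over $\varphi(\sigma)$, with $\dim$ preserved), commuting with gluing ($\widetilde\varphi(\mathsf g(\mathfrak a,\sigma))=\mathsf g'(\widetilde\varphi(\mathfrak a),\varphi(\sigma))$), with $\widetilde\varphi(\mathfrak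 a_0)=\widehat{\mathfrak a}_0$, $\widehat\gamma\circ\widetilde\varphi=\gamma$, and $\widetilde\varphi(\omega_{\mathfrak b}(l).\mathfrak a)=\widehat\omega_{\widetilde\varphi(\mathfrak b)}(l).\widetilde\varphi(\mathfrak a)$ for all $\mathfrak b$, $\mathfrak a\in\delta(\mathfrak b)$, $l\in\mathbb Z/k\mathbb Z$. The $k$-regular $d$-dimensional arboreal complex $T_{d,k}$ is the simplicial complex obtained by starting from a single $d$-simplex $\mathcal T$, attaching to each of its $(d-1)$-faces $k-1$ new $d$-simplices each using a new vertex, and inductively attaching to each $(d-1)$-face created in the previous step $k-1$ new $d$-simplices each using a new vertex; $T_{d,k}$ is the union over all steps. *)

From Stdlib Require Import Relations.
From mathcomp Require Import all_boot.
Set Implicit Arguments. Unset Strict Implicit. Unset Printing Implicit Defensive.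

(* Cells.  Vertices are natural numbers (a countable vertex set); a cell   *)
(* (finite set of vertices) is represented canonically by the strictly     *)
(* increasing list of its vertices.  A cell of dimension n has size n+1;   *)
(* the empty cell has size 0 (dimension -1).                               *)
Definition cell := seq nat.

Definition codim1 (s t : cell) : Prop := size t = (size s).+1 /\ subseq s t.

Definition img (f : nat -> nat) (s : cell) : cell := sort leq (undup (map f s)).

Definition cap (s t : cell) : cell := [seq x <- s | x \in t].

Definition is_simplicial_complex (d : nat) (X : cell -> Prop) : Prop :=
  [/\ (forall s, X s -> sorted ltn s),
      X [::],
      (forall s t, X t -> subseq s t -> X s),
      (forall s, X s -> size s <= d.+1)
    & (exists s, X s /\ size s = d.+1)].

(* Raw data of a multicomplex: cells X, multiplicity m, gluing g.           *)
(* g a sigma is the index s such that g(a, sigma) = (sigma, s).             *)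
Definition mcell := (cell * nat)%type.

Record mcx := MCX {
  mcX : cell -> Prop;
  mcm : cell -> nat;
  mcg : mcell -> cell -> nat
}.

Definition is_mcell (M : mcx) (a : mcell) : Prop :=
  mcX M a.1 /\ 1 <= a.2 <= mcm M a.1.

Definition glue (M : mcx) (a : mcell) (s : cell) : mcell := (s, mcg M a s).

Definition gstep (M : mcx) (b a : mcell) : Prop :=
  is_mcell M a /\ exists s, codim1 s a.1 /\ b = glue M a s.

Definition contained (M : mcx) : relation mcell :=
  clos_refl_trans mcell (gstep M).

Definition is_multicomplex (d : nat) (M : mcx) : Prop :=
  [/\ is_simplicial_complex d (mcX M),
      (forall t, mcX M t -> 1 <= mcm M t),
      mcm M [::] = 1,
      (forall v, mcX M [:: v] -> mcm M [:: v] = 1)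
    & (forall a s, is_mcell M a -> codim1 s a.1 -> 1 <= mcg M a s <= mcm M s)] /\
      (forall a a' c rho,
         is_mcell M a -> is_mcell M a' -> is_mcell M c ->
         size a.1 = size a'.1 ->
         contained M a c -> contained M a' c ->
         rho = cap a.1 a'.1 -> codim1 rho a.1 -> codim1 rho a'.1 ->
         mcg M a rho = mcg M a' rho).

Definition top_mcell (d : nat) (M : mcx) (a : mcell) : Prop :=
  is_mcell M a /\ size a.1 = d.+1.
Definition facet_mcell (d : nat) (M : mcx) (b : mcell) : Prop :=
  is_mcell M b /\ size b.1 = d.

Definition delta (d : nat) (M : mcx) (b a : mcell) : Prop :=
  top_mcell d M a /\ contained M b a.

Definition is_pure (d : nat) (M : mcx) : Prop :=
  forall a, is_mcell M a -> exists c, top_mcell d M c /\ contained M a c.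

Definition neighbors (d : nat) (M : mcx) (a a' : mcell) : Prop :=
  top_mcell d M a /\ top_mcell d M a' /\
  exists b, facet_mcell d M b /\ contained M b a /\ contained M b a'.

Definition lower_path_connected (d : nat) (M : mcx) : Prop :=
  forall a a', top_mcell d M a -> top_mcell d M a' ->
    clos_refl_trans mcell (neighbors d M) a a'.

Definition degree_le (d k : nat) (M : mcx) : Prop :=
  forall b, facet_mcell d M b ->
    exists s : seq mcell, size s <= k /\ forall a, delta d M b a -> a \in s.

Definition is_coloring (d : nat) (M : mcx) (gam : nat -> nat) : Prop :=
  (forall v, mcX M [:: v] -> gam v <= d) /\
  (forall s, mcX M s -> size s = d.+1 -> uniq (map gam s)).

Definition colorable (d : nat) (M : mcx) : Prop :=
  exists gam, is_coloring d M gam.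

(* k-ordering.  om b l a = omega_b(l).a.  A homomorphism Z/kZ -> Sym(delta b)
   is encoded as a monoid homomorphism (nat,+) -> Sym(delta b) sending k to
   the identity (these correspond bijectively). *)
Definition ordering := mcell -> nat -> mcell -> mcell.

Definition is_k_ordering (d k : nat) (M : mcx) (om : ordering) : Prop :=
  forall b, facet_mcell d M b ->
    [/\ (forall l a, delta d M b a -> delta d M b (om b l a)),
        (forall a, delta d M b a -> om b 0 a = a),
        (forall l1 l2 a, delta d M b a -> om b (l1 + l2) a = om b l1 (om b l2 a)),
        (forall a, delta d M b a -> om b k a = a)
      & (forall a a', delta d M b a -> delta d M b a' -> exists l, om b l a = a')].

Definition is_object (d k : nat) (M : mcx) (gam : nat -> nat) (om : ordering)
    (a0 : mcell) : Prop :=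
  [/\ is_multicomplex d M, is_pure d M, colorable d M,
      lower_path_connected d M & degree_le d k M] /\
  [/\ is_coloring d M gam, is_k_ordering d k M om & top_mcell d M a0].

Definition is_morphism (d k : nat)
    (M : mcx) (gam : nat -> nat) (om : ordering) (a0 : mcell)
    (N : mcx) (gam' : nat -> nat) (om' : ordering) (b0 : mcell)
    (phi : mcell -> mcell) : Prop :=
  exists f : nat -> nat,
  [/\
      (forall s, mcX M s -> mcX N (img f s)),
      (forall a, is_mcell M a ->
         [/\ is_mcell N (phi a), (phi a).1 = img f a.1 & size (phi a).1 = size a.1]),
      (forall a s, is_mcell M a -> codim1 s a.1 ->
         phi (glue M a s) = glue N (phi a) (img f s))
    & phi a0 = b0] /\
  (
      (forall a, is_mcell M a -> img gam' (phi a).1 = img gam a.1) /\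
      (forall b a l, facet_mcell d M b -> delta d M b a ->
         phi (om b l a) = om' (phi b) l (phi a))).

(* Initial simplex on vertices 0..d.  The new vertex used for the j-th      *)
(* (1 <= j <= k-1) simplex attached to the face F is d+1+pickle(F,j).       *)
Definition Tbase (d : nat) : cell := iota 0 d.+1.
Definition fresh (d : nat) (F : cell) (j : nat) : nat := d.+1 + pickle (F, j).
Definition attach (d : nat) (F : cell) (j : nat) : cell := sort leq (fresh d F j :: F).

Inductive Tface (d k : nat) : cell -> Prop :=
| Tface0 F : codim1 F (Tbase d) -> Tface d k F
| TfaceS F j F' : Tface d k F -> 1 <= j < k ->
    codim1 F' (attach d F j) -> fresh d F j \in F' -> Tface d k F'.

Inductive Ttop (d k : nat) : cell -> Prop :=
| Ttop0 : Ttop d k (Tbase d)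
| TtopS F j : Tface d k F -> 1 <= j < k -> Ttop d k (attach d F j).

Definition Tcell (d k : nat) (s : cell) : Prop :=
  exists t, Ttop d k t /\ subseq s t.

Definition Tmc (d k : nat) : mcx := MCX (Tcell d k) (fun _ => 1) (fun _ _ => 1).

Definition Tinit (d : nat) : mcell := (Tbase d, 1).

(* T_{d,k} is a tree of d-simplices: each (d-1)-face F is created in a unique parent
   simplex p, and the k simplices containing F are p and the k-1 simplices attached
   to F.  Since Om_F is a transitive action of Z/kZ on these k simplices, it is free,
   so a morphism is forced simplex by simplex along the tree: the root goes to the
   root, and if p goes to x then Om_F(l).p must go to om'_B(l).x, where B is the facet
   of x carrying the colors of F.  Colors also force the vertex map: a vertex goes to
   the vertex of its color in the image of the simplex where it was born.  A cell then
   goes to the face with the image vertex set inside the image of its birth simplex;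
   faces of a multicell are unique by the consistency of the gluing, which makes this
   map commute with gluing and pins down any other morphism. *)

From Stdlib Require Import Relations ClassicalEpsilon.
From mathcomp Require Import all_boot.
Set Implicit Arguments. Unset Strict Implicit. Unset Printing Implicit Defensive.

(** * Cells as sorted lists *)

Lemma ltn_sorted_eq (s1 s2 : seq nat) :
  sorted ltn s1 -> sorted ltn s2 -> s1 =i s2 -> s1 = s2.
Proof. apply: irr_sorted_eq; [exact: ltn_trans | exact: ltnn]. Qed.

Lemma sorted_ltn_uniq (s : seq nat) : sorted ltn s -> uniq s.
Proof. by rewrite ltn_sorted_uniq_leq => /andP[]. Qed.

Lemma sorted_ltn_subseq (s t : seq nat) : subseq s t -> sorted ltn t -> sorted ltn s.
Proof. by apply: subseq_sorted; exact: ltn_trans. Qed.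

Lemma sorted_ltn_sub_subseq (s t : seq nat) :
  sorted ltn s -> sorted ltn t -> {subset s <= t} -> subseq s t.
Proof.
move=> ss st sst; apply/(subseq_uniqP (sorted_ltn_uniq st)).
apply: ltn_sorted_eq => //; first by apply: sorted_filter => //; exact: ltn_trans.
by move=> x; rewrite mem_filter; case xs: (x \in s); rewrite //= sst.
Qed.

Lemma subseq_size_eq (T : eqType) (s t : seq T) :
  subseq s t -> size t <= size s -> s = t.
Proof.
move=> st le; apply/eqP; rewrite -(size_subseq_leqif st).
by apply/eqP/anti_leq; rewrite le size_subseq.
Qed.

Lemma uniq_sub_size_eq (T : eqType) (s t : seq T) :
  uniq s -> {subset s <= t} -> size t <= size s -> s =i t.
Proof. by move=> us st le; case: (uniq_min_size us st le). Qed.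

Lemma uniq_map_inj_in (T1 T2 : eqType) (f : T1 -> T2) (s : seq T1) :
  uniq (map f s) -> {in s &, injective f}.
Proof.
elim: s => //= z s IH /andP[nz us] x y; rewrite !in_cons.
case/orP=> [/eqP->|xs]; case/orP=> [/eqP->|ys] // e.
- by move: nz; rewrite e (map_f f ys).
- by move: nz; rewrite -e (map_f f xs).
- exact: IH.
Qed.

Lemma subseq_codim1_between (T : eqType) (s t : seq T) :
  subseq s t -> size s < size t ->
  exists t', size t = (size t').+1 /\ subseq t' t /\ subseq s t'.
Proof.
elim: t s => [|y t IH] [|x s] //=.
  by move=> _ _; exists t; split=> //; split; [exact: subseq_cons | exact: sub0seq].
case: eqP => [-> | _] st ltst; last by exists t; split=> //; split=> //; exact: subseq_cons.
have [t' [e [h1 h2]]] := IH _ st ltst.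
by exists (y :: t'); rewrite /= e eqxx.
Qed.

Lemma cap_codim1_eq (A A' C : seq nat) : sorted ltn A -> sorted ltn A' ->
  subseq C A -> subseq C A' -> size A = (size C).+1 -> size A' = (size C).+1 ->
  A <> A' -> cap A A' = C.
Proof.
move=> sA sA' cA cA' eA eA' nAA'.
have scap : sorted ltn (cap A A') by apply: sorted_filter => //; exact: ltn_trans.
have Ccap : {subset C <= cap A A'}.
  by move=> x xC; rewrite mem_filter (mem_subseq cA' xC) (mem_subseq cA xC).
have size_cap : size (cap A A') <= size C.
  have : size (cap A A') <= size A by rewrite size_filter count_size.
  rewrite leq_eqVlt eA ltnS => /orP[/eqP ecap|//]; case: nAA'.
  have capA : cap A A' = A by apply: subseq_size_eq; rewrite ?filter_subseq ?ecap ?eA.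
  apply: ltn_sorted_eq => //; apply: uniq_sub_size_eq; first exact: sorted_ltn_uniq.
    by move=> x; rewrite -capA mem_filter => /andP[].
  by rewrite eA eA'.
have sC : sorted ltn C := sorted_ltn_subseq cA sA.
apply: ltn_sorted_eq => // x.
by rewrite (uniq_sub_size_eq (sorted_ltn_uniq sC) Ccap size_cap).
Qed.

Lemma bigmax_seq_mem (s : seq nat) : s != [::] -> \max_(v <- s) v \in s.
Proof.
elim: s => // y s IH _; rewrite big_cons in_cons.
case: s IH => [|z s] IH; first by rewrite big_nil maxn0 eqxx.
by rewrite /maxn; case: ltnP => _; rewrite ?eqxx // IH ?orbT.
Qed.

Section Image.
Implicit Types (f g : nat -> nat) (s : cell).

Lemma img_sorted f s : sorted ltn (img f s).
Proof.
rewrite ltn_sorted_uniq_leq /img sort_sorted ?andbT; last exact: leq_total.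
by rewrite sort_uniq undup_uniq.
Qed.

Lemma mem_img f s x : (x \in img f s) = (x \in map f s).
Proof. by rewrite /img mem_sort mem_undup. Qed.

Lemma eq_in_img f g s : {in s, f =1 g} -> img f s = img g s.
Proof. by move=> /eq_in_map h; rewrite /img h. Qed.

Lemma img_comp f g s : img g (img f s) = img (g \o f) s.
Proof.
apply: ltn_sorted_eq; rewrite ?img_sorted // => x.
by rewrite !mem_img map_comp; apply/mapP/mapP => -[y yi ->]; exists y;
  rewrite ?mem_img // -mem_img.
Qed.

Lemma size_img f s : uniq s -> {in s &, injective f} -> size (img f s) = size s.
Proof.
by move=> us fi; rewrite /img size_sort undup_id ?size_map // map_inj_in_uniq.
Qed.

Lemma img_subseq f s t : subseq s t -> subseq (img f s) (img f t).
Proof.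
move=> st; apply: sorted_ltn_sub_subseq; rewrite ?img_sorted // => w.
by rewrite !mem_img => /mapP[v vs ->]; rewrite map_f // (mem_subseq st).
Qed.

End Image.

(** * Faces in a multicomplex *)

Section Multicomplex.
Variables (d : nat) (M : mcx).
Hypothesis hM : is_multicomplex d M.

Lemma mc_sorted s : mcX M s -> sorted ltn s.
Proof. by case: hM => -[[h _ _ _ _] _ _ _ _] _ /h. Qed.

Lemma mc_subseq s t : mcX M t -> subseq s t -> mcX M s.
Proof. by case: hM => -[[_ _ h _ _] _ _ _ _] _; exact: h. Qed.

Lemma gstep_subseq b a : gstep M b a -> subseq b.1 a.1 /\ size a.1 = (size b.1).+1.
Proof. by case=> _ [s [[e st] ->]]. Qed.

Lemma contained_gstep b a :
  contained M b a -> b = a \/ exists c, gstep M b c /\ contained M c a.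
Proof.
move=> h; case: (clos_rt_rt1n _ _ _ _ h) => [|y z h1 h2]; first by left.
by right; exists y; split=> //; exact/clos_rt_rt1n_iff.
Qed.

Lemma contained_subseq b a : contained M b a -> subseq b.1 a.1.
Proof.
elim=> [x y /gstep_subseq [] //|x|x y z _ h1 _ h2]; first exact: subseq_refl.
exact: subseq_trans h1 h2.
Qed.

Lemma contained_size b a : contained M b a -> b = a \/ size b.1 < size a.1.
Proof.
elim=> [x y /gstep_subseq [_ ->]|x|x y z _ h1 _ h2]; [by right | by left |].
case: h1 => [->|h1] //; case: h2 => [<-|h2]; [by right | right; exact: ltn_trans h2].
Qed.

Lemma contained_eq b a : contained M b a -> size a.1 <= size b.1 -> b = a.
Proof. by case/contained_size => [//|h] le; move: (leq_ltn_trans le h); rewrite ltnn. Qed.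

Lemma gstep_mcell b a : gstep M b a -> is_mcell M b.
Proof.
case=> ma [s [[e st] ->]]; case: hM => -[_ _ _ _ hg] _.
by split; [apply: mc_subseq st; case: ma | exact: hg].
Qed.

Lemma contained_mcell b a : is_mcell M a -> contained M b a -> is_mcell M b.
Proof. by move=> ma /contained_gstep [->|[c [/gstep_mcell h _]]]. Qed.

Lemma glue_gstep a s : is_mcell M a -> codim1 s a.1 -> gstep M (glue M a s) a.
Proof. by move=> ma cs; split=> //; exists s. Qed.

Lemma glue_mcell a s : is_mcell M a -> codim1 s a.1 -> is_mcell M (glue M a s).
Proof. by move=> ma cs; apply: gstep_mcell; exact: glue_gstep. Qed.

Lemma face_exists a C : is_mcell M a -> subseq C a.1 ->
  exists c, contained M c a /\ c.1 = C.
Proof.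
move=> ma; move eqn: (size a.1 - size C) => n.
elim: n a ma eqn => [|n IH] a ma eqn sCa.
  exists a; split; first exact: rt_refl.
  by symmetry; apply: subseq_size_eq sCa _; rewrite -subn_eq0 eqn.
have lt : size C < size a.1 by rewrite -subn_gt0 eqn.
have [t' [e [h1 h2]]] := subseq_codim1_between sCa lt.
have ga : gstep M (glue M a t') a by exact: glue_gstep.
have en : size t' - size C = n by move: eqn; rewrite e subSn ?size_subseq //; case.
have [c [cc ec]] := IH _ (gstep_mcell ga) en h2.
by exists c; split=> //; apply: rt_trans cc (rt_step _ _ _ _ ga).
Qed.

Lemma glue_consistent a a' c0 s : is_mcell M c0 ->
  gstep M (glue M a s) a -> gstep M (glue M a' s) a' ->
  contained M a c0 -> contained M a' c0 -> a.1 != a'.1 -> mcg M a s = mcg M a' s.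
Proof.
move=> m0 ga ga' ca ca' naa.
have ma : is_mcell M a by case: ga. have ma' : is_mcell M a' by case: ga'.
have [sa ea] := gstep_subseq ga; have [sa' ea'] := gstep_subseq ga'.
case: hM => _ /(_ a a' c0 s ma ma'); apply => //; first by rewrite ea ea'.
symmetry; apply: cap_codim1_eq => //.
- by apply: mc_sorted; case: ma.
- by apply: mc_sorted; case: ma'.
- by move=> e; rewrite e eqxx in naa.
Qed.

(* Induction on the codimension of c in c0; two distinct cells through which c is
   reached are handled by the consistency of the gluing. *)
Lemma contained_cell_inj c0 c c' : is_mcell M c0 ->
  contained M c c0 -> contained M c' c0 -> c.1 = c'.1 -> c = c'.
Proof.
move=> m0; move eqn: (size c0.1 - size c.1) => n.
elim: n c c' eqn => [|n IH] c c' eqn cc cc' e.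
  have -> : c = c0 by apply: contained_eq cc _; rewrite -subn_eq0 eqn.
  by symmetry; apply: contained_eq cc' _; rewrite -e -subn_eq0 eqn.
case: (contained_gstep cc) => [ec|[a [ga ca]]]; first by move: eqn; rewrite ec subnn.
case: (contained_gstep cc') => [ec'|[a' [ga' ca']]]; first by move: eqn; rewrite e ec' subnn.
have ena : size c0.1 - size a.1 = n by rewrite (gstep_subseq ga).2 subnS eqn.
have [_ [s [_ ec]]] := ga; have [_ [s' [_ ec']]] := ga'.
have es : s' = s by rewrite -[s]/(glue M a s).1 -[s']/(glue M a' s').1 -ec -ec'.
rewrite {}es in ec' ga'; rewrite {}ec {}ec' in ga ga' *.
case: (eqVneq a.1 a'.1) => [eaa|naa]; first by rewrite (IH a a').
by rewrite /glue (glue_consistent m0 ga ga' ca ca' naa).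
Qed.

Definition face (x : mcell) (C : cell) : mcell :=
  epsilon (inhabits x) (fun c => contained M c x /\ c.1 = C).

Lemma faceP x C : is_mcell M x -> subseq C x.1 ->
  contained M (face x C) x /\ (face x C).1 = C.
Proof.
move=> mx sC; apply: (epsilon_spec (inhabits x) (fun c => contained M c x /\ c.1 = C)).
exact: face_exists.
Qed.

Lemma face_contained x c : is_mcell M x -> contained M c x -> face x c.1 = c.
Proof.
move=> mx cc; have [h1 h2] := faceP mx (contained_subseq cc).
exact: contained_cell_inj mx h1 cc h2.
Qed.

Lemma face_trans y c C : is_mcell M y -> contained M c y -> subseq C c.1 ->
  face y C = face c C.
Proof.
move=> my cy sC; have mc := contained_mcell my cy; have [cC eC] := faceP mc sC.
by rewrite -{1}eC face_contained //; exact: rt_trans cC cy.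
Qed.

End Multicomplex.

Section Coloring.
Variables (d : nat) (M : mcx) (gam : nat -> nat).
Hypotheses (hM : is_multicomplex d M) (hgam : is_coloring d M gam).

(* The vertex of color c in the d-cell s (junk [0] if there is none). *)
Definition vertex_of_color (s : cell) (c : nat) : nat :=
  nth 0 [seq v <- s | gam v == c] 0.

Lemma color_le s v : mcX M s -> v \in s -> gam v <= d.
Proof.
move=> ms vs; case: hgam => h _; apply: h; apply: (mc_subseq hM ms).
by rewrite sub1seq.
Qed.

Lemma color_uniq s : mcX M s -> size s = d.+1 -> uniq (map gam s).
Proof. by case: hgam => _ h; apply: h. Qed.

Lemma color_mem s c : mcX M s -> size s = d.+1 -> c <= d -> c \in map gam s.
Proof.
move=> ms es cd.
suff -> : map gam s =i iota 0 d.+1 by rewrite mem_iota add0n ltnS.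
apply: uniq_sub_size_eq; first exact: color_uniq.
  by move=> x /mapP[v vs ->]; rewrite mem_iota add0n ltnS (color_le ms vs).
by rewrite size_iota size_map es.
Qed.

Lemma vertex_of_colorP s c : mcX M s -> size s = d.+1 -> c <= d ->
  vertex_of_color s c \in s /\ gam (vertex_of_color s c) = c.
Proof.
move=> ms es cd; have /mapP[v vs ev] := color_mem ms es cd.
have : 0 < size [seq v <- s | gam v == c].
  by rewrite size_filter -has_count; apply/hasP; exists v; rewrite // ev.
by move/(mem_nth 0); rewrite mem_filter => /andP[/eqP].
Qed.

Lemma vertex_of_color_eq s v : mcX M s -> size s = d.+1 -> v \in s ->
  vertex_of_color s (gam v) = v.
Proof.
move=> ms es vs; have [h1 h2] := vertex_of_colorP ms es (color_le ms vs).
exact: (uniq_map_inj_in (color_uniq ms es) h1 vs h2).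
Qed.

End Coloring.

(** * The arboreal complex T_{d,k} *)

Lemma code_gt_mem x s : x \in s -> x < CodeSeq.code s.
Proof.
elim: s => //= y s IH; rewrite in_cons => /orP[/eqP->|/IH h].
  apply: leq_trans (ltn_expl y (isT : 1 < 2)) _.
  by rewrite -{1}(muln1 (2 ^ y)) leq_mul2l ltn0Sn orbT.
apply: leq_trans h (leq_trans (leqnSn _) _).
rewrite -[(CodeSeq.code s).+1]mul1n leq_mul ?expn_gt0 //.
by rewrite ltnS -addnn leq_addr.
Qed.

Section Arboreal.
Variables (d k : nat).

Lemma fresh_gt F j x : x \in F -> x < fresh d F j.
Proof.
move=> xF; rewrite /fresh; apply: leq_trans (leq_addl _ _).
have -> : pickle (F, j) = CodeSeq.code [:: CodeSeq.code (map id F); j] by [].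
apply: ltn_trans (code_gt_mem (s := map id F) _) _; first by rewrite map_id.
by apply: code_gt_mem; rewrite in_cons eqxx.
Qed.

Lemma fresh_gt_dim F j : d < fresh d F j.
Proof. by rewrite /fresh addSn ltnS leq_addr. Qed.

Lemma fresh_inj F j F' j' : fresh d F j = fresh d F' j' -> F = F' /\ j = j'.
Proof. by move/addnI/(pcan_inj pickleK) => [-> ->]. Qed.

Lemma fresh_notin F j : fresh d F j \notin F.
Proof. by apply/negP => /(fresh_gt j); rewrite ltnn. Qed.

Lemma mem_attach F j y : (y \in attach d F j) = (y == fresh d F j) || (y \in F).
Proof. by rewrite /attach mem_sort in_cons. Qed.

Lemma attach_sorted F j : sorted ltn F -> sorted ltn (attach d F j).
Proof.
move=> sF; rewrite ltn_sorted_uniq_leq sort_sorted ?andbT; last exact: leq_total.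
by rewrite sort_uniq /= fresh_notin sorted_ltn_uniq.
Qed.

Lemma size_attach F j : size (attach d F j) = (size F).+1.
Proof. by rewrite /attach size_sort. Qed.

Lemma subseq_attach F j : sorted ltn F -> subseq F (attach d F j).
Proof.
move=> sF; apply: sorted_ltn_sub_subseq; rewrite ?attach_sorted // => x xF.
by rewrite mem_attach xF orbT.
Qed.

Lemma subseq_attach_fresh F j s : sorted ltn F -> subseq s (attach d F j) ->
  fresh d F j \notin s -> subseq s F.
Proof.
move=> sF st fs; apply: sorted_ltn_sub_subseq => //.
  exact: sorted_ltn_subseq st (attach_sorted _ sF).
move=> v vs; move: (mem_subseq st vs); rewrite mem_attach => /orP[/eqP ev|//].
by move: fs; rewrite -ev vs.
Qed.

Lemma bigmax_attach_fresh F j s : subseq s (attach d F j) -> fresh d F j \in s ->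
  \max_(v <- s) v = fresh d F j.
Proof.
move=> st fs; have ns : s != [::] by case: s fs st.
move: (mem_subseq st (bigmax_seq_mem ns)); rewrite mem_attach => /orP[/eqP //|mF].
have := leq_bigmax_seq (F := id) _ fs (isT : predT _).
by move/leq_ltn_trans/(_ (fresh_gt j mF)); rewrite ltnn.
Qed.
Lemma fresh_attach_eq F j G i :
  fresh d F j \in attach d G i -> fresh d G i \in attach d F j -> F = G /\ j = i.
Proof.
rewrite !mem_attach => /orP[/eqP/fresh_inj //|/(fresh_gt i) l1].
case/orP=> [/eqP/esym/fresh_inj //|/(fresh_gt j) l2].
by move: (ltn_trans l1 l2); rewrite ltnn.
Qed.

Lemma attach_inj F j F' j' : attach d F j = attach d F' j' -> F = F' /\ j = j'.
Proof.
by move=> e; apply: fresh_attach_eq; [rewrite -e | rewrite e]; rewrite mem_attach eqxx.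
Qed.

Lemma mem_Tbase x : (x \in Tbase d) = (x <= d).
Proof. by rewrite mem_iota add0n ltnS. Qed.

Lemma Tbase_sorted : sorted ltn (Tbase d).
Proof. exact: iota_ltn_sorted. Qed.

Lemma size_Tbase : size (Tbase d) = d.+1.
Proof. by rewrite size_iota. Qed.

Lemma fresh_notin_Tbase F j : fresh d F j \notin Tbase d.
Proof. by rewrite mem_Tbase -ltnNge fresh_gt_dim. Qed.

Lemma attach_neq_Tbase F j : attach d F j <> Tbase d.
Proof. by move=> e; move: (fresh_notin_Tbase F j); rewrite -e mem_attach eqxx. Qed.

Lemma codim1_sizeP F t : size F = d -> size t = d.+1 -> subseq F t -> codim1 F t.
Proof. by move=> e1 e2 s; split=> //; rewrite e1 e2. Qed.

Lemma Tface_shape F : Tface d k F -> sorted ltn F /\ size F = d.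
Proof.
elim=> [G [e s] | G j G' _ [sG eG] _ [e s] _].
  by rewrite (sorted_ltn_subseq s Tbase_sorted); move: e; rewrite size_Tbase => -[].
by rewrite (sorted_ltn_subseq s (attach_sorted _ sG)); move: e; rewrite size_attach eG => -[].
Qed.

Lemma Ttop_shape t : Ttop d k t -> sorted ltn t /\ size t = d.+1.
Proof.
case=> [|F j hF _]; first by rewrite Tbase_sorted size_Tbase.
by have [sF eF] := Tface_shape hF; rewrite attach_sorted // size_attach eF.
Qed.

Lemma Ttop_attach_face F j : Tface d k F -> subseq F (attach d F j).
Proof. by case/Tface_shape => sF _; exact: subseq_attach. Qed.

Lemma Tcell_sorted s : Tcell d k s -> sorted ltn s.
Proof. by case=> t [/Ttop_shape [st _] ss]; exact: sorted_ltn_subseq ss st. Qed.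

Lemma Ttop_Tcell t : Ttop d k t -> Tcell d k t.
Proof. by move=> h; exists t; split=> //; exact: subseq_refl. Qed.

Lemma Tcell_Ttop t : Tcell d k t -> size t = d.+1 -> Ttop d k t.
Proof.
case=> t' [ht' s] e; have [_ e'] := Ttop_shape ht'.
by rewrite (subseq_size_eq s) ?e ?e'.
Qed.

Lemma codim1_attach F j F' : sorted ltn F -> size F = d ->
  codim1 F' (attach d F j) -> F' = F \/ fresh d F j \in F'.
Proof.
move=> sF eF [e s]; case fF: (fresh d F j \in F'); [by right | left].
apply: ltn_sorted_eq; first exact: sorted_ltn_subseq s (attach_sorted _ sF).
  by [].
apply: uniq_sub_size_eq.
- exact: sorted_ltn_uniq (sorted_ltn_subseq s (attach_sorted _ sF)).
- move=> x xF'; move: (mem_subseq s xF'); rewrite mem_attach => /orP[/eqP ex|//].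
  by move: xF'; rewrite ex fF.
- by move: e; rewrite size_attach eF => -[<-].
Qed.

Lemma Tcell_Tface F : Tcell d k F -> size F = d -> Tface d k F.
Proof.
case=> t [[|G j hG hj] sFt] eF.
  by constructor; apply: codim1_sizeP; rewrite ?size_Tbase.
have [sG eG] := Tface_shape hG.
have cF : codim1 F (attach d G j) by apply: codim1_sizeP; rewrite // size_attach eG.
by case: (codim1_attach sG eG cF) => [->|hf]; last exact: TfaceS hG hj cF hf.
Qed.

(* The d-simplex of T_{d,k} at which the (d-1)-face F was created. *)
Definition parent (F p : cell) : Prop :=
  (p = Tbase d /\ codim1 F (Tbase d)) \/
  exists G j,
    [/\ Tface d k G, 1 <= j < k, p = attach d G j, codim1 F p & fresh d G j \in F].

Lemma parent_exists F : Tface d k F -> exists p, parent F p.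
Proof.
case=> [G h | G j G' hG hj h hf]; first by exists (Tbase d); left.
by exists (attach d G j); right; exists G, j.
Qed.

Lemma parent_top F p : parent F p -> Ttop d k p /\ codim1 F p.
Proof. by case=> [[-> h]|[G [j [hG hj -> h _]]]]; split=> //; constructor. Qed.

Lemma parent_face F p : parent F p -> Tface d k F.
Proof.
by case=> [[_ h]|[G [j [hG hj -> h hf]]]]; [exact: Tface0 | exact: TfaceS hG hj h hf].
Qed.

Lemma parent_unique F p q : parent F p -> parent F q -> p = q.
Proof.
have no_fresh G j : codim1 F (Tbase d) -> fresh d G j \in F -> False.
  by move=> [_ s] /(mem_subseq s); rewrite (negbTE (fresh_notin_Tbase _ _)).
case=> [[-> c]|[G [j [_ _ -> [_ s] f]]]] [[-> c']|[G' [j' [_ _ -> [_ s'] f']]]] //.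
- by case: (no_fresh _ _ c f').
- by case: (no_fresh _ _ c' f).
have [-> ->] := fresh_attach_eq (mem_subseq s' f) (mem_subseq s f') => //.
Qed.

Lemma tops_of_face F p t : parent F p -> Ttop d k t -> subseq F t ->
  t = p \/ exists2 j, 1 <= j < k & t = attach d F j.
Proof.
move=> hp ht sFt; have [sF eF] := Tface_shape (parent_face hp).
case: ht sFt => [|F' j' hF' hj'] sFt.
  left; apply: parent_unique hp; left; split=> //.
  by apply: codim1_sizeP; rewrite ?size_Tbase.
have [sF' eF'] := Tface_shape hF'.
have cF : codim1 F (attach d F' j') by apply: codim1_sizeP; rewrite // size_attach eF'.
case: (codim1_attach sF' eF' cF) => [->|hf']; first by right; exists j'.
by left; apply: parent_unique hp; right; exists F', j'.
Qed.

Definition tops_at (F p : cell) : seq cell := p :: map (attach d F) (iota 1 k.-1).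

Lemma size_tops_at F p : 1 <= k -> size (tops_at F p) = k.
Proof. by move=> k1; rewrite /= size_map size_iota prednK. Qed.

Lemma tops_at_uniq F p : parent F p -> uniq (tops_at F p).
Proof.
move=> hp /=; rewrite map_inj_in_uniq ?iota_uniq ?andbT; last first.
  by move=> i j _ _ /attach_inj [].
apply/mapP => -[j _ e]; case: hp => [[ep _]|[G [i [_ _ ep _ hf]]]].
  by apply: (@attach_neq_Tbase F j); rewrite -e ep.
by move: e hf; rewrite ep => /attach_inj [-> _]; rewrite (negbTE (fresh_notin _ _)).
Qed.

Lemma mem_tops_at F p t : parent F p -> Ttop d k t -> subseq F t -> t \in tops_at F p.
Proof.
move=> hp ht sFt; rewrite in_cons.
case: (tops_of_face hp ht sFt) => [->|[j /andP[j1 jk] ->]]; first by rewrite eqxx.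
have k0 : 0 < k := ltn_trans j1 jk.
by rewrite map_f ?orbT // mem_iota j1 add1n prednK.
Qed.

Lemma tops_atP F p t : parent F p -> t \in tops_at F p -> Ttop d k t /\ subseq F t.
Proof.
move=> hp; rewrite in_cons => /orP[/eqP->|/mapP[j jin ->]].
  by have [h [_ s]] := parent_top hp.
have hF := parent_face hp; split; last exact: Ttop_attach_face.
apply: TtopS => //; move: jin; rewrite mem_iota => /andP[j1].
by case: k => [|n] /=; [case: j j1 | rewrite j1 add1n].
Qed.

End Arboreal.

Lemma clos_rt_sym (A : Type) (R : relation A) : (forall x y, R x y -> R y x) ->
  forall x y, clos_refl_trans A R x y -> clos_refl_trans A R y x.
Proof.
move=> hs x y; elim=> [a b /hs h|a|a b c _ h1 _ h2]; first exact: rt_step.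
  exact: rt_refl.
exact: rt_trans h2 h1.
Qed.

Section ArborealObject.
Variables (d k : nat).
Notation T := (Tmc d k).

Lemma Tmc_mcellP a : is_mcell T a <-> Tcell d k a.1 /\ a.2 = 1.
Proof.
rewrite /is_mcell /=; split=> -[h1 h2]; split=> //; last by rewrite h2.
by apply/eqP; rewrite eqn_leq andbC.
Qed.

Lemma Tmc_multicomplex : is_multicomplex d T.
Proof.
split=> //; split=> //; split=> /=.
- exact: Tcell_sorted.
- by exists (Tbase d); split; [constructor | exact: sub0seq].
- by move=> s t [u [hu tu]] st; exists u; split=> //; exact: subseq_trans st tu.
- by move=> s [u [/Ttop_shape [_ e] su]]; rewrite -e size_subseq.
- by exists (Tbase d); rewrite size_Tbase; split=> //; apply/Ttop_Tcell/Ttop0.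
Qed.

Lemma Tmc_contained s t : Tcell d k t -> subseq s t -> contained T (s,1) (t,1).
Proof.
move=> ht st; have mt : is_mcell T (t,1) by apply/Tmc_mcellP.
have [[s' r] [cc /= es]] := face_exists Tmc_multicomplex mt st.
have /Tmc_mcellP [_ /= er] := contained_mcell Tmc_multicomplex mt cc.
by rewrite es er in cc.
Qed.

Lemma Tmc_topP a : top_mcell d T a <-> Ttop d k a.1 /\ a.2 = 1.
Proof.
split=> [[/Tmc_mcellP [h1 h2] e]|[h1 h2]]; first by split=> //; exact: Tcell_Ttop.
split; first by apply/Tmc_mcellP; split=> //; exact: Ttop_Tcell.
by case: (Ttop_shape h1).
Qed.

Lemma Tmc_deltaP F a : facet_mcell d T (F,1) ->
  delta d T (F,1) a <-> [/\ Ttop d k a.1, a.2 = 1 & subseq F a.1].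
Proof.
move=> hF; split=> [[/Tmc_topP [h1 h2] c]|[h1 h2 h3]].
  by split=> //; exact: (contained_subseq c).
split; first by apply/Tmc_topP.
by case: a h1 h2 h3 => t r /= h1 -> h3; apply: Tmc_contained => //; exact: Ttop_Tcell.
Qed.

Lemma Tmc_facet b : facet_mcell d T b -> Tface d k b.1 /\ b.2 = 1.
Proof. by case=> /Tmc_mcellP [h1 h2] e; split=> //; exact: Tcell_Tface. Qed.

Lemma Tface_facet F : Tface d k F -> facet_mcell d T (F,1).
Proof.
move=> hF; have [p hp] := parent_exists hF; have [hp1 [_ s]] := parent_top hp.
split; last by case: (Tface_shape hF).
by apply/Tmc_mcellP; split=> //; exists p.
Qed.

Lemma parent_delta F p : parent d k F p ->
  facet_mcell d T (F,1) /\ delta d T (F,1) (p,1).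
Proof.
move=> hp; have hb := Tface_facet (parent_face hp); have [tp [_ sp]] := parent_top hp.
by split=> //; apply/(Tmc_deltaP _ hb).
Qed.

Lemma attach_delta F j : Tface d k F -> 1 <= j < k -> delta d T (F,1) (attach d F j, 1).
Proof.
move=> hF hj; apply/(Tmc_deltaP _ (Tface_facet hF)).
by split=> /=; [exact: TtopS | | exact: Ttop_attach_face j hF].
Qed.

Lemma Tmc_pure : is_pure d T.
Proof.
move=> [s r] /Tmc_mcellP [[t [ht st]] /= ->]; exists (t,1).
by split; [apply/Tmc_topP | apply: Tmc_contained => //; exact: Ttop_Tcell].
Qed.

Lemma Tmc_degree : 1 <= k -> degree_le d k T.
Proof.
move=> k1 [F r] hb; have [/= hF er] := Tmc_facet hb; subst r.
have [p hp] := parent_exists hF.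
exists (map (pair^~ 1) (tops_at d k F p)); split; first by rewrite size_map size_tops_at.
move=> -[t r'] /(Tmc_deltaP _ hb) [/= ht -> sFt].
exact: (map_f (pair^~ 1) (mem_tops_at hp ht sFt)).
Qed.

Lemma Tmc_neighbors F t t' : Tface d k F ->
  Ttop d k t -> subseq F t -> Ttop d k t' -> subseq F t' -> neighbors d T (t,1) (t',1).
Proof.
move=> hF ht st ht' st'; split; first exact/Tmc_topP.
split; first exact/Tmc_topP.
exists (F,1); split; first exact: Tface_facet.
by split; apply: Tmc_contained => //; exact: Ttop_Tcell.
Qed.

Lemma attach_neighbors_parent F p j : parent d k F p -> 1 <= j < k ->
  neighbors d T (attach d F j, 1) (p,1).
Proof.
move=> hp hj; have hF := parent_face hp; have [tp [_ sp]] := parent_top hp.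
exact: Tmc_neighbors hF (TtopS hF hj) (Ttop_attach_face j hF) tp sp.
Qed.

Lemma parent_path F : Tface d k F ->
  exists p, parent d k F p /\ clos_refl_trans mcell (neighbors d T) (p,1) (Tinit d).
Proof.
elim=> [G h|G j G' hG [p [hp c]] hj h hf].
  by exists (Tbase d); split; [left | exact: rt_refl].
exists (attach d G j); split; first by right; exists G, j.
exact: rt_trans (rt_step _ _ _ _ (attach_neighbors_parent hp hj)) c.
Qed.

Lemma Ttop_path t : Ttop d k t -> clos_refl_trans mcell (neighbors d T) (t,1) (Tinit d).
Proof.
case=> [|F j hF hj]; first exact: rt_refl.
have [p [hp c]] := parent_path hF.
exact: rt_trans (rt_step _ _ _ _ (attach_neighbors_parent hp hj)) c.
Qed.

Lemma Tmc_lower_path_connected : lower_path_connected d T.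
Proof.
move=> [t r] [t' r'] /Tmc_topP [/= ht ->] /Tmc_topP [/= ht' ->].
apply: rt_trans (Ttop_path ht) (clos_rt_sym _ (Ttop_path ht')).
by move=> x y [hx [hy [b [hb [c1 c2]]]]]; do 2!split=> //; exists b.
Qed.

End ArborealObject.

(** * k-orderings *)

Section Ordering.
Variables (d k : nat) (M : mcx) (om : ordering).
Hypothesis hom : is_k_ordering d k M om.
Variable b : mcell.
Hypothesis hb : facet_mcell d M b.

Lemma om_delta l a : delta d M b a -> delta d M b (om b l a).
Proof. by case: (hom hb) => h *; apply: h. Qed.

Lemma om0 a : delta d M b a -> om b 0 a = a.
Proof. by case: (hom hb) => _ h *; apply: h. Qed.

Lemma omD l1 l2 a : delta d M b a -> om b (l1 + l2) a = om b l1 (om b l2 a).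
Proof. by case: (hom hb) => _ _ h _ _; apply: h. Qed.

Lemma om_transitive a a' : delta d M b a -> delta d M b a' -> exists l, om b l a = a'.
Proof. by case: (hom hb) => _ _ _ _ h; apply: h. Qed.

Lemma om_modn l a : delta d M b a -> om b (l %% k) a = om b l a.
Proof.
move=> ha; rewrite [in RHS](divn_eq l k) addnC omD //.
suff -> : om b (l %/ k * k) a = a by [].
elim: (l %/ k) => [|n IH]; first by rewrite mul0n om0.
case: (hom hb) => _ _ _ hk _.
by rewrite mulSn omD // IH hk.
Qed.

Lemma om_eq_mod l1 l2 a : delta d M b a -> l1 = l2 %[mod k] -> om b l1 a = om b l2 a.
Proof. by move=> ha e; rewrite -om_modn // e om_modn. Qed.

(* A transitive action of Z/kZ on at least k points is free. *)
Lemma om_free (s : seq mcell) l1 l2 a : 0 < k -> delta d M b a ->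
  uniq s -> k <= size s -> (forall c, c \in s -> delta d M b c) ->
  om b l1 a = om b l2 a -> l1 = l2 %[mod k].
Proof.
move=> k0 ha us ks sd e; pose g i := om b i a.
have sub : {subset s <= map g (iota 0 k)}.
  move=> c cs; have [l <-] := om_transitive ha (sd c cs).
  by apply/mapP; exists (l %% k); rewrite ?mem_iota ?ltn_mod // /g om_modn.
have ug : uniq (map g (iota 0 k)) by apply: leq_size_uniq us sub _; rewrite size_map size_iota.
apply: (uniq_map_inj_in ug); rewrite ?mem_iota ?ltn_mod //.
by rewrite /g !om_modn.
Qed.

End Ordering.

(** * The universal morphism *)

Section Universal.
Variables (d k : nat) (Gam : nat -> nat) (Om : ordering).
Hypotheses (k1 : 1 <= k) (hGam : is_coloring d (Tmc d k) Gam)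
  (hOm : is_k_ordering d k (Tmc d k) Om).
Variables (N : mcx) (gam' : nat -> nat) (om' : ordering) (b0 : mcell).
Hypotheses (hNm : is_multicomplex d N) (hNc : is_coloring d N gam')
  (hNo : is_k_ordering d k N om') (hb0 : top_mcell d N b0).

Notation T := (Tmc d k).
Notation hTm := (Tmc_multicomplex d k).

Lemma top_mcX x : top_mcell d N x -> mcX N x.1.
Proof. by case=> -[]. Qed.

Lemma Om_free_parent F p l1 l2 : parent d k F p ->
  Om (F,1) l1 (p,1) = Om (F,1) l2 (p,1) -> l1 = l2 %[mod k].
Proof.
move=> hp e; have [hb dp] := parent_delta hp.
apply: (om_free hOm hb k1 dp (s := map (pair^~ 1) (tops_at d k F p))) e.
- by rewrite map_inj_uniq ?tops_at_uniq // => t t' [].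
- by rewrite size_map size_tops_at.
move=> c /mapP[t /(tops_atP hp) [ht st] ->]; apply/(Tmc_deltaP _ hb).
by split.
Qed.

Lemma Gam_face_uniq F p : parent d k F p -> uniq (map Gam F).
Proof.
move=> hp; have [tp [_ sp]] := parent_top hp; have [_ ep] := Ttop_shape tp.
exact: subseq_uniq (map_subseq Gam sp) (color_uniq hGam (Ttop_Tcell tp) ep).
Qed.

Lemma Gam_face_le F p v : parent d k F p -> v \in F -> Gam v <= d.
Proof.
move=> hp vF; have [tp [_ sp]] := parent_top hp.
exact: (color_le hTm hGam (Ttop_Tcell tp) (mem_subseq sp vF)).
Qed.

Definition face_colored (x F : cell) : cell := [seq v <- x | gam' v \in map Gam F].

Definition glue_colored (x : mcell) (F : cell) : mcell := glue N x (face_colored x.1 F).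

Lemma face_colored_sorted x F : top_mcell d N x -> sorted ltn (face_colored x.1 F).
Proof.
move=> hx; apply: sorted_filter; first exact: ltn_trans.
exact: (mc_sorted hNm (top_mcX hx)).
Qed.

Lemma face_colored_codim1 x F p : top_mcell d N x -> parent d k F p ->
  codim1 (face_colored x.1 F) x.1.
Proof.
move=> hx hp; have [mx ex] := hx; split; last exact: filter_subseq.
rewrite ex; congr S; have [_ eF] := Tface_shape (parent_face hp).
rewrite -(size_map gam') /face_colored -filter_map -eF -(size_map Gam F).
apply: perm_size; apply: uniq_perm.
- exact: Gam_face_uniq hp.
- exact/filter_uniq/(color_uniq hNc (top_mcX hx) ex).
move=> c; rewrite mem_filter; apply/idP/andP => [cin|[]//]; split=> //.
case/mapP: cin => v vF ->; apply: (color_mem hNm hNc (top_mcX hx) ex).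
exact: Gam_face_le hp vF.
Qed.

Lemma glue_coloredP x F p : top_mcell d N x -> parent d k F p ->
  [/\ facet_mcell d N (glue_colored x F), gstep N (glue_colored x F) x
    & delta d N (glue_colored x F) x].
Proof.
move=> hx hp; have c := face_colored_codim1 hx hp.
have g : gstep N (glue_colored x F) x := glue_gstep (proj1 hx) c.
split=> //; last by split=> //; exact: rt_step.
split; first exact: (gstep_mcell hNm g).
by case: c; case: hx => _ -> [].
Qed.

(* Defined along the tree: the simplex that Om_F(l) makes out of the parent p of F
   goes where om'_B(l) moves the image x of p, B being the facet of x colored like F. *)
Inductive image_top : cell -> mcell -> Prop :=
| image_base : image_top (Tbase d) b0
| image_attach F p x j l : parent d k F p -> image_top p x -> 1 <= j < k ->
    Om (F,1) l (p,1) = (attach d F j, 1) ->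
    image_top (attach d F j) (om' (glue_colored x F) l x).

Lemma image_topP t x : image_top t x -> Ttop d k t /\ top_mcell d N x.
Proof.
elim=> {t x} [|F p x j l hp _ [_ hx] hj _]; first by split; [constructor | exact: hb0].
split; first exact: TtopS (parent_face hp) hj.
have [fb _ db] := glue_coloredP hx hp.
by case: (om_delta hNo fb l db).
Qed.

Lemma image_topE t y : image_top t y ->
  (t = Tbase d /\ y = b0) \/
  exists F p x j l, [/\ parent d k F p, image_top p x,
    Om (F,1) l (p,1) = (attach d F j, 1), t = attach d F j
    & y = om' (glue_colored x F) l x].
Proof. by case=> [|F p x j l hp hx _ hl]; [left | right; exists F, p, x, j, l]. Qed.

Lemma image_top_fun t x y : image_top t x -> image_top t y -> x = y.
Proof.
move=> hx; elim: hx y => {t x} [|F p x j l hp hx IH hj hl] y.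
  by case/image_topE => [[_ ->] //|[F [p [x [j [l [_ _ _ /esym/attach_neq_Tbase]]]]]]].
case/image_topE=> [[/attach_neq_Tbase] //|[F' [p' [x' [j' [l' [hp' hx' hl' e ->]]]]]]].
have [eF ej] := attach_inj e; subst F' j'; have ep := parent_unique hp hp'; subst p'.
rewrite -(IH _ hx') in hl' *.
have [fb _ db] := glue_coloredP (proj2 (image_topP hx)) hp.
by apply: (om_eq_mod hNo fb db); apply: (Om_free_parent hp); rewrite hl hl'.
Qed.

Lemma image_attach_exists F p x j : parent d k F p -> image_top p x -> 1 <= j < k ->
  exists y, image_top (attach d F j) y.
Proof.
move=> hp hx hj; have [hb dp] := parent_delta hp.
have [l hl] := om_transitive hOm hb dp (attach_delta (parent_face hp) hj).
by exists (om' (glue_colored x F) l x); exact: image_attach hp hx hj hl.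
Qed.

Lemma image_parent_exists F : Tface d k F -> exists p x, parent d k F p /\ image_top p x.
Proof.
elim=> [G h|G j G' _ [p [x [hp hx]]] hj h hf].
  by exists (Tbase d), b0; split; [left | exact: image_base].
have [y hy] := image_attach_exists hp hx hj.
by exists (attach d G j), y; split=> //; right; exists G, j; split=> //; exact: parent_face hp.
Qed.

Lemma image_top_exists t : Ttop d k t -> exists x, image_top t x.
Proof.
case=> [|F j hF hj]; first by exists b0; exact: image_base.
by have [p [x [hp hx]]] := image_parent_exists hF; exact: image_attach_exists hp hx hj.
Qed.

Definition top_image (t : cell) : mcell := epsilon (inhabits b0) (image_top t).

Lemma top_imageP t : Ttop d k t -> image_top t (top_image t).
Proof. by move=> ht; apply: epsilon_spec; exact: image_top_exists. Qed.

Lemma top_image_eq t x : image_top t x -> top_image t = x.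
Proof.
by move=> hx; apply: image_top_fun (top_imageP (proj1 (image_topP hx))) hx.
Qed.

(* The d-simplex of T_{d,k} in which the vertex v first appears. *)
Definition birth (v : nat) : cell :=
  if v <= d then Tbase d else
  if unpickle (v - d.+1) is Some (F, j) then attach d F j else Tbase d.

Lemma birth_base v : v <= d -> birth v = Tbase d.
Proof. by rewrite /birth => ->. Qed.

Lemma birth_fresh F j : birth (fresh d F j) = attach d F j.
Proof. by rewrite /birth leqNgt fresh_gt_dim /= /fresh addKn pickleK. Qed.

Definition vertex_image (v : nat) : nat :=
  vertex_of_color gam' (top_image (birth v)).1 (Gam v).

(* Inside the image of an attached simplex, the vertices of the base facet keep
   the images they had in the parent. *)
Lemma vertex_of_color_glue_colored x F p y v :
  top_mcell d N x -> parent d k F p -> delta d N (glue_colored x F) y -> v \in F ->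
  vertex_of_color gam' y.1 (Gam v) = vertex_of_color gam' x.1 (Gam v).
Proof.
move=> hx hp [hy cy] vF; have [mx ex] := hx.
have [wx gw] := vertex_of_colorP hNm hNc (top_mcX hx) ex (Gam_face_le hp vF).
rewrite -{1}gw; apply: (vertex_of_color_eq hNm hNc (top_mcX hy) (proj2 hy)).
apply: (mem_subseq (contained_subseq cy)).
by rewrite /= mem_filter wx andbT gw map_f.
Qed.

Lemma vertex_image_top t x v : image_top t x -> v \in t ->
  vertex_image v = vertex_of_color gam' x.1 (Gam v).
Proof.
move=> hx; elim: hx v => {t x} [|F p x j l hp hx IH hj hl] v.
  by rewrite mem_Tbase => vd; rewrite /vertex_image birth_base // (top_image_eq image_base).
rewrite mem_attach => /orP[/eqP->|vF].
  by rewrite /vertex_image birth_fresh (top_image_eq (image_attach hp hx hj hl)).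
have [tp [_ sp]] := parent_top hp; have [_ hxt] := image_topP hx.
have [fb _ db] := glue_coloredP hxt hp.
rewrite (IH v (mem_subseq sp vF)).
exact/esym/(vertex_of_color_glue_colored hxt hp (om_delta hNo fb l db) vF).
Qed.

Lemma vertex_imageP t x v : image_top t x -> v \in t ->
  vertex_image v \in x.1 /\ gam' (vertex_image v) = Gam v.
Proof.
move=> hx vt; have [tt [mx ex]] := image_topP hx; have [_ et] := Ttop_shape tt.
rewrite (vertex_image_top hx vt); apply: (vertex_of_colorP hNm hNc (proj1 mx) ex).
exact: (color_le hTm hGam (Ttop_Tcell tt) vt).
Qed.

Lemma vertex_image_inj t x : image_top t x -> {in t &, injective vertex_image}.
Proof.
move=> hx u v ut vt e; have [tt _] := image_topP hx; have [_ et] := Ttop_shape tt.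
apply: (uniq_map_inj_in (color_uniq hGam (Ttop_Tcell tt) et) ut vt).
by rewrite -(vertex_imageP hx ut).2 -(vertex_imageP hx vt).2 e.
Qed.

Lemma img_vertex_image_subseq t x s : image_top t x -> subseq s t ->
  subseq (img vertex_image s) x.1.
Proof.
move=> hx st; have [_ /top_mcX mx] := image_topP hx.
apply: sorted_ltn_sub_subseq; rewrite ?img_sorted ?(mc_sorted hNm mx) // => w.
by rewrite mem_img => /mapP[v vs ->]; exact: (vertex_imageP hx (mem_subseq st vs)).1.
Qed.

Lemma size_img_vertex_image t x s : image_top t x -> subseq s t ->
  size (img vertex_image s) = size s.
Proof.
move=> hx st; have [/Ttop_shape [st' _] _] := image_topP hx.
rewrite size_img ?(sorted_ltn_uniq (sorted_ltn_subseq st st')) //.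
move=> u v us vs; exact: (vertex_image_inj hx (mem_subseq st us) (mem_subseq st vs)).
Qed.

Lemma img_vertex_image_top t x : image_top t x -> img vertex_image t = x.1.
Proof.
move=> hx; have [tt [mx ex]] := image_topP hx; have [_ et] := Ttop_shape tt.
apply: subseq_size_eq; first exact: img_vertex_image_subseq hx (subseq_refl t).
by rewrite (size_img_vertex_image hx (subseq_refl t)) ex et.
Qed.

Lemma img_vertex_image_face F p x : parent d k F p -> image_top p x ->
  img vertex_image F = face_colored x.1 F.
Proof.
move=> hp hx; have [tp [_ sp]] := parent_top hp; have [_ hxt] := image_topP hx.
have [sF eF] := Tface_shape (parent_face hp).
apply: ltn_sorted_eq; rewrite ?img_sorted ?face_colored_sorted //.
apply: uniq_sub_size_eq; first exact: sorted_ltn_uniq (img_sorted _ _).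
  move=> w; rewrite mem_img => /mapP[v vF ->].
  have [wx gw] := vertex_imageP hx (mem_subseq sp vF).
  by rewrite mem_filter wx andbT gw map_f.
rewrite (size_img_vertex_image hx sp) eF.
by case: (face_colored_codim1 hxt hp); case: hxt => _ -> [->].
Qed.

Definition cell_birth (s : cell) : cell := birth (\max_(v <- s) v).

Lemma cell_birth_base s : subseq s (Tbase d) -> cell_birth s = Tbase d.
Proof.
move=> sb; rewrite /cell_birth birth_base //.
have [->|ns] := eqVneq s [::]; first by rewrite big_nil.
by have := mem_subseq sb (bigmax_seq_mem ns); rewrite mem_Tbase.
Qed.

(* Passing from a parent to an attached simplex keeps the faces of the shared facet,
   so every simplex containing s agrees with the birth simplex of s. *)
Lemma face_image_birth t x s : image_top t x -> subseq s t ->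
  face N x (img vertex_image s) = face N (top_image (cell_birth s)) (img vertex_image s).
Proof.
move=> hx; elim: hx s => {t x} [|F p x j l hp hx IH hj hl] s st.
  by rewrite cell_birth_base // (top_image_eq image_base).
have [sF _] := Tface_shape (parent_face hp).
have [fs|fs] := boolP (fresh d F j \in s).
  by rewrite /cell_birth (bigmax_attach_fresh st fs) birth_fresh
    (top_image_eq (image_attach hp hx hj hl)).
have sFs := subseq_attach_fresh sF st fs; have [tp [_ sp]] := parent_top hp.
rewrite -(IH s (subseq_trans sFs sp)).
have [_ hxt] := image_topP hx; have [fb gb db] := glue_coloredP hxt hp.
have [[my _] cy] := om_delta hNo fb l db.
have sub : subseq (img vertex_image s) (glue_colored x F).1.
  by rewrite /= -(img_vertex_image_face hp hx) img_subseq.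
by rewrite (face_trans hNm my cy sub) (face_trans hNm (proj1 hxt) (rt_step _ _ _ _ gb) sub).
Qed.

Definition phi (a : mcell) : mcell :=
  face N (top_image (cell_birth a.1)) (img vertex_image a.1).

Lemma phi_image_top t x s r : image_top t x -> subseq s t ->
  [/\ phi (s,r) = face N x (img vertex_image s), contained N (phi (s,r)) x
    & (phi (s,r)).1 = img vertex_image s].
Proof.
move=> hx st; have [_ [mx _]] := image_topP hx.
have e : phi (s,r) = face N x (img vertex_image s) by rewrite (face_image_birth hx st).
by rewrite e; have [] := faceP hNm mx (img_vertex_image_subseq hx st).
Qed.

Lemma Tmc_mcell_top a : is_mcell T a -> exists t, [/\ Ttop d k t, subseq a.1 t & a.2 = 1].
Proof. by move/Tmc_mcellP => [[t [ht st]] e]; exists t. Qed.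

Lemma phi_top t x : image_top t x -> phi (t,1) = x.
Proof.
move=> hx; have [e _ _] := phi_image_top 1 hx (subseq_refl t).
rewrite e (img_vertex_image_top hx); have [_ [mx _]] := image_topP hx.
exact: (face_contained hNm mx (rt_refl _ (gstep N) x)).
Qed.

Lemma phi_facet F p x : parent d k F p -> image_top p x -> phi (F,1) = glue_colored x F.
Proof.
move=> hp hx; have [tp [_ sp]] := parent_top hp; have [_ hxt] := image_topP hx.
have [e _ _] := phi_image_top 1 hx sp; rewrite e (img_vertex_image_face hp hx).
have [_ gb _] := glue_coloredP hxt hp.
exact: (face_contained hNm (proj1 hxt) (rt_step _ _ _ _ gb)).
Qed.

Lemma phi_mcell a : is_mcell T a ->
  [/\ is_mcell N (phi a), (phi a).1 = img vertex_image a.1 & size (phi a).1 = size a.1].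
Proof.
move=> /Tmc_mcell_top [t [tt st _]]; case: a st => s r /= st.
have hx := top_imageP tt; have [_ [mx _]] := image_topP hx.
have [_ c ->] := phi_image_top r hx st.
by rewrite (size_img_vertex_image hx st); split=> //; exact: (contained_mcell hNm mx c).
Qed.

Lemma phi_glue a s : is_mcell T a -> codim1 s a.1 ->
  phi (glue T a s) = glue N (phi a) (img vertex_image s).
Proof.
move=> ma [es ss]; have [t [tt st ea]] := Tmc_mcell_top ma.
case: a ma ss es st ea => s0 r0 ma /= ss es st ->.
have hx := top_imageP tt; have [_ [mx _]] := image_topP hx.
have sst := subseq_trans ss st.
have [-> _ _] := phi_image_top 1 hx sst; have [_ c0 e0] := phi_image_top 1 hx st.
have cd : codim1 (img vertex_image s) (phi (s0,1)).1.
  split; last by rewrite e0 img_subseq.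
  by rewrite e0 (size_img_vertex_image hx sst) (size_img_vertex_image hx st).
have [m0 _ _] := phi_mcell ma.
have cc := rt_trans _ _ _ _ _ (rt_step _ _ _ _ (glue_gstep m0 cd)) c0.
exact: (face_contained hNm mx cc).
Qed.

Lemma phi_root : phi (Tinit d) = b0.
Proof. exact: phi_top image_base. Qed.

Lemma phi_color a : is_mcell T a -> img gam' (phi a).1 = img Gam a.1.
Proof.
move=> ma; have [_ -> _] := phi_mcell ma; rewrite img_comp.
have [t [tt st _]] := Tmc_mcell_top ma; have hx := top_imageP tt.
by apply: eq_in_img => v vs /=; exact: (vertex_imageP hx (mem_subseq st vs)).2.
Qed.

Lemma phi_delta F p x t : parent d k F p -> image_top p x -> delta d T (F,1) (t,1) ->
  exists l, Om (F,1) l (p,1) = (t,1) /\ phi (t,1) = om' (glue_colored x F) l x.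
Proof.
move=> hp hx dt; have [hb dp] := parent_delta hp; have [_ hxt] := image_topP hx.
have [fb _ db] := glue_coloredP hxt hp; have [/= tt _ st] := (Tmc_deltaP _ hb).1 dt.
case: (tops_of_face hp tt st) => [->|[j hj et]].
  by exists 0; rewrite (om0 hOm hb dp) (om0 hNo fb db) (phi_top hx).
have [l hl] := om_transitive hOm hb dp dt.
by exists l; split=> //; rewrite et in hl *; rewrite (phi_top (image_attach hp hx hj hl)).
Qed.

Lemma phi_ordering b a l : facet_mcell d T b -> delta d T b a ->
  phi (Om b l a) = om' (phi b) l (phi a).
Proof.
case: b => F r hb; have [/= hF er] := Tmc_facet hb; subst r.
have [p [x [hp hx]]] := image_parent_exists hF; have [_ hxt] := image_topP hx.
have [fb _ db] := glue_coloredP hxt hp; have [_ dp] := parent_delta hp.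
case: a => ta ra da; have [_ /= era _] := (Tmc_deltaP _ hb).1 da; subst ra.
have [la [hla ->]] := phi_delta hp hx da.
have da2 := om_delta hOm hb l da.
have [ta2 ea2] : exists ta2, Om (F,1) l (ta,1) = (ta2,1).
  have [_ /= e _] := (Tmc_deltaP _ hb).1 da2.
  by exists (Om (F,1) l (ta,1)).1; case: (Om (F,1) l (ta,1)) e => ? ? /= ->.
rewrite ea2 in da2 *; have [l2 [hl2 ->]] := phi_delta hp hx da2.
rewrite (phi_facet hp hx) -(omD hNo fb _ _ db); apply: (om_eq_mod hNo fb db).
by apply: (Om_free_parent hp); rewrite hl2 (omD hOm hb _ _ dp) hla.
Qed.

Lemma phi_morphism : is_morphism d k T Gam Om (Tinit d) N gam' om' b0 phi.
Proof.
exists vertex_image; split; split.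
- move=> s hs; have ms : is_mcell T (s,1) by apply/Tmc_mcellP.
  by have [[m _] <- _] := phi_mcell ms.
- exact: phi_mcell.
- exact: phi_glue.
- exact: phi_root.
- exact: phi_color.
- by move=> b a l hb da; exact: phi_ordering.
Qed.

Section Uniqueness.
Variables (psi : mcell -> mcell) (g : nat -> nat).
Hypotheses
  (psi_cell : forall a, is_mcell T a ->
     [/\ is_mcell N (psi a), (psi a).1 = img g a.1 & size (psi a).1 = size a.1])
  (psi_glue : forall a s, is_mcell T a -> codim1 s a.1 ->
     psi (glue T a s) = glue N (psi a) (img g s))
  (psi_root : psi (Tinit d) = b0)
  (psi_color : forall a, is_mcell T a -> img gam' (psi a).1 = img Gam a.1)
  (psi_ordering : forall b a l, facet_mcell d T b -> delta d T b a ->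
     psi (Om b l a) = om' (psi b) l (psi a)).

Lemma psi_vertex_color v : Tcell d k [:: v] -> gam' (g v) = Gam v.
Proof.
move=> hv; have mv : is_mcell T ([:: v],1) by apply/Tmc_mcellP.
by have := psi_color mv; have [_ -> _] := psi_cell mv; rewrite /img /= => -[].
Qed.

Lemma psi_gstep b a : gstep T b a -> gstep N (psi b) (psi a).
Proof.
move=> [ma [s [cs ->]]]; rewrite psi_glue //.
have [ma' e2 z2] := psi_cell ma; apply: glue_gstep => //.
have [_ e1 z1] := psi_cell (glue_mcell hTm ma cs).
split; last by rewrite e2 img_subseq //; case: cs.
by rewrite z2 -[img g s](e1) z1; case: cs.
Qed.

Lemma psi_contained b a : contained T b a -> contained N (psi b) (psi a).
Proof.
elim=> [x y /psi_gstep h|x|x y z _ h1 _ h2]; [exact: rt_step | exact: rt_refl |].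
exact: rt_trans h1 h2.
Qed.

Lemma psi_vertex_image t x v : image_top t x -> psi (t,1) = x -> v \in t ->
  g v = vertex_image v.
Proof.
move=> hx ex vt; have [tt hxt] := image_topP hx.
have mt : is_mcell T (t,1) by apply/Tmc_mcellP; split=> //; exact: Ttop_Tcell.
have [_ e _] := psi_cell mt; rewrite ex /= in e.
have gx : g v \in x.1 by rewrite e mem_img map_f.
have hv : Tcell d k [:: v] by exists t; rewrite sub1seq.
rewrite (vertex_image_top hx vt) -(psi_vertex_color hv).
by rewrite (vertex_of_color_eq hNm hNc (top_mcX hxt) (proj2 hxt) gx).
Qed.

Lemma psi_top t x : image_top t x -> psi (t,1) = x.
Proof.
elim=> {t x} [|F p x j l hp hx IH hj hl] //; rewrite -hl.
have [hb dp] := parent_delta hp; have [tp cp] := parent_top hp.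
have mp : is_mcell T (p,1) by apply/Tmc_mcellP; split=> //; exact: Ttop_Tcell.
rewrite psi_ordering // IH; congr om'.
rewrite -[(F,1)]/(glue T (p,1) F) psi_glue // IH /glue_colored.
rewrite -(img_vertex_image_face hp hx); congr glue; apply: eq_in_img => v vF.
exact: psi_vertex_image hx IH (mem_subseq cp.2 vF).
Qed.

Lemma psi_phi a : is_mcell T a -> psi a = phi a.
Proof.
move=> ma; have [t [tt st ea]] := Tmc_mcell_top ma.
case: a ma st ea => s r ma /= st er; subst r.
have hx := top_imageP tt; have [_ [mx _]] := image_topP hx; have pt := psi_top hx.
have c := psi_contained (Tmc_contained (Ttop_Tcell tt) st); rewrite pt in c.
have [-> _ _] := phi_image_top 1 hx st; have [_ es _] := psi_cell ma.
rewrite -(face_contained hNm mx c) es /=; congr face; apply: eq_in_img => v vs.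
exact: psi_vertex_image hx pt (mem_subseq st vs).
Qed.

End Uniqueness.

Lemma morphism_unique psi : is_morphism d k T Gam Om (Tinit d) N gam' om' b0 psi ->
  forall a, is_mcell T a -> psi a = phi a.
Proof.
by case=> g [[_ hcell hglue hroot] [hcol hord]]; exact: psi_phi hcell hglue hroot hcol hord.
Qed.

End Universal.

Theorem proposition5 (d k : nat) (Gam : nat -> nat) (Om : ordering) :
  1 <= d -> 1 <= k ->
  is_coloring d (Tmc d k) Gam ->
  is_k_ordering d k (Tmc d k) Om ->
  is_object d k (Tmc d k) Gam Om (Tinit d) /\
  (forall (N : mcx) (gam' : nat -> nat) (om' : ordering) (b0 : mcell),
     is_object d k N gam' om' b0 ->
     exists phi : mcell -> mcell,
       is_morphism d k (Tmc d k) Gam Om (Tinit d) N gam' om' b0 phi /\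
       forall psi : mcell -> mcell,
         is_morphism d k (Tmc d k) Gam Om (Tinit d) N gam' om' b0 psi ->
         forall a, is_mcell (Tmc d k) a -> psi a = phi a).
Proof.
move=> _ k1 hGam hOm; split.
  split; split.
  - exact: Tmc_multicomplex.
  - exact: Tmc_pure.
  - by exists Gam.
  - exact: Tmc_lower_path_connected.
  - exact: Tmc_degree.
  - exact: hGam.
  - exact: hOm.
  - by apply/Tmc_topP; split=> //; constructor.
move=> N gam' om' b0 [[hNm _ _ _ _] [hNc hNo hb0]].
exists (phi d k Gam Om N gam' om' b0).
split; first exact: (phi_morphism k1 hGam hOm hNm hNc hNo hb0).
by move=> psi; exact: (morphism_unique k1 hGam hOm hNm hNc hNo hb0).
Qed.
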